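(* Let $(X,T)$ be a minimal topological dynamical system whose proximal relation ${\bf P}(X,T)$ is closed in $X\times X$, and let $d\in\mathbb{N}$. Then the maximal distal factor of $(N_d(X,T),\mathcal{G}_d(T))$ is $(N_d(X_{dis},T),\mathcal{G}_d(T))$, where $X_{dis}$ is the maximal distal factor of $(X,T)$ (the factor map being the restriction of $\pi\times\cdots\times\pi$, $\pi:X\to X_{dis}$).
   Context: ${\bf P}(X,T)=\{(x,y)\in X^2:\liminf_{n\in\mathbb{Z}}\rho(T^nx,T^ny)=0\}$. $\sigma_d(T)=T\times\cdots\times T$, $\tau_d(T)=T\times T^2\times\cdots\times T^d$ on $X^d$, $\mathcal{G}_d(T)=\langle\sigma_d(T),\tau_d(T)\rangle$, $N_d(X,T)=\overline{\{(T^{p+q}x,\dots,T^{p+dq}x):x\in X,p,q\in\mathbb{Z}\}}$. A system is distal if its proximal relation is the diagonal; the maximal distal factor is the largest distal factor. *)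

From HB Require Import structures.
From mathcomp Require Import all_boot all_order all_algebra.
From mathcomp Require Import all_classical all_reals all_analysis.
Unset Printing Implicit Defensive.
Import Order.TTheory GRing.Theory Num.Theory.
Local Open Scope classical_set_scope.
Local Open Scope ring_scope.

Section Defs.
Context {R : realType}.

(** integer iterates of an invertible map [f] with inverse [finv]:
    T^n for n >= 0 is [iter n f], T^(-(k+1)) is [iter k.+1 finv] *)
Definition iterz {X : Type} (f finv : X -> X) (n : int) : X -> X :=
  match n with
  | Posz k => iter k f
  | Negz k => iter k.+1 finv
  end.

Definition zact {X : Type} (T Tinv : X -> X) : int -> X -> X := iterz T Tinv.

(** The proximal relation P(X,T) of a Z-system, literally:
    liminf_{n in Z} rho(T^n x, T^n y) = 0, i.e. for every e > 0 and every N
    there is n with |n| >= N and rho(T^n x, T^n y) < e. *)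
Definition proxrel {X : pseudoMetricType R} (T Tinv : X -> X) : set (X * X) :=
  [set xy | forall (e : R) (N : nat), 0 < e ->
     exists n : int, (N <= `|n|)%N /\ ball (iterz T Tinv n xy.1) e (iterz T Tinv n xy.2)].

Definition minimal_sys {X : topologicalType} (T : X -> X) :=
  forall A : set X, closed A -> A !=set0 -> T @` A = A -> A = setT.

(** General group actions  act : G -> Y -> Y  restricted to a subset A of Y
    (the phase space of the system is the subspace A). *)

Definition proximal {G : Type} {Y : pseudoMetricType R}
  (act : G -> Y -> Y) (x y : Y) :=
  forall e : R, 0 < e -> exists g : G, ball (act g x) e (act g y).

Definition system_on {G : Type} {Y : pseudoMetricType R}
  (act : G -> Y -> Y) (A : set Y) :=
  [/\ hausdorff_space Y, compact A,
      forall g, {within A, continuous (act g)} &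
      forall g, act g @` A `<=` A].

Definition distal_on {G : Type} {Y : pseudoMetricType R}
  (act : G -> Y -> Y) (A : set Y) :=
  forall x y, A x -> A y -> proximal act x y -> x = y.

Definition factor_map {G : Type} {Y Z : pseudoMetricType R}
  (actY : G -> Y -> Y) (A : set Y) (actZ : G -> Z -> Z) (B : set Z)
  (f : Y -> Z) :=
  [/\ {within A, continuous f}, f @` A = B &
      forall g x, A x -> f (actY g x) = actZ g (f x)].

Definition max_distal_factor {G : Type} {Y Z : pseudoMetricType R}
  (actY : G -> Y -> Y) (A : set Y) (actZ : G -> Z -> Z) (B : set Z)
  (f : Y -> Z) :=
  [/\ system_on actZ B, factor_map actY A actZ B f, distal_on actZ B &
      forall (W : pseudoMetricType R) (actW : G -> W -> W) (C : set W)
             (h : Y -> W),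
        system_on actW C -> factor_map actY A actW C h -> distal_on actW C ->
        exists k : Z -> W,
          factor_map actZ B actW C k /\ forall x, A x -> h x = k (f x)].

(** X^d, with the max (sup) metric over the d coordinates *)
Definition powd (X : pseudoMetricType R) (d : nat) : pseudoMetricType R :=
  arrow_uniform_type 'I_d X.

(** sigma_d(T) = T x ... x T,  tau_d(T) = T x T^2 x ... x T^d
    (coordinate i : 'I_d is the (i+1)-th coordinate) *)
Definition sigma_d {X : pseudoMetricType R} (d : nat) (T : X -> X)
  : powd X d -> powd X d := fun x i => T (x i).
Definition tau_d {X : pseudoMetricType R} (d : nat) (T : X -> X)
  : powd X d -> powd X d := fun x i => iter i.+1 T (x i).

(** the action of G_d(T) = <sigma_d(T), tau_d(T)> (sigma and tau commute,
    so every element is sigma^p tau^q) *)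
Definition gd_act {X : pseudoMetricType R} (d : nat) (T Tinv : X -> X)
  : int * int -> powd X d -> powd X d :=
  fun pq => iterz (sigma_d d T) (sigma_d d Tinv) pq.1
            \o iterz (tau_d d T) (tau_d d Tinv) pq.2.

Definition Nd {X : pseudoMetricType R} (d : nat) (T Tinv : X -> X)
  : set (powd X d) :=
  closure [set y : powd X d | exists (x : X) (p q : int),
                      y = (fun i : 'I_d => iterz T Tinv (p + (i.+1)%:Z * q) x)].

Definition powmap {X Y : pseudoMetricType R} (d : nat) (pi : X -> Y)
  : powd X d -> powd Y d := fun x i => pi (x i).

End Defs.

From HB Require Import structures.
From mathcomp Require Import all_boot all_order all_algebra.
From mathcomp Require Import all_classical all_reals all_analysis.
From mathcomp Require Import zify ring lra.
Import Order.TTheory GRing.Theory Num.Theory.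
Local Open Scope classical_set_scope.
Local Open Scope ring_scope.

(* Since P(X,T) is closed, it is an equivalence relation with closed saturations,
   so countably many continuous P-invariant Urysohn functions separate the
   P-classes. They embed X/P equivariantly into a shift on R^(N x N x Z), and this
   factor of (X,T) is distal because proximality passes from a limit point of an
   orbit of pairs back to the pair itself. By maximality, pi identifies only
   proximal points. Conversely, if y, y' in N_d(X,T) have the same image under
   pi x ... x pi, their coordinates are pairwise proximal; using sigma_d to make
   one coordinate pair equal at a time, the G_d-orbit closure of (y, y') meets
   the diagonal, so every distal factor of N_d(X,T) identifies y and y'. By
   compactness it therefore factors continuously through pi x ... x pi. *)

Section IterZ.
Context {X : Type} {f g : X -> X} (fK : cancel f g) (gK : cancel g f).

Lemma iterzS n x : iterz f g (1 + n) x = f (iterz f g n x).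
Proof.
case: n => [k|[|k]]; [by rewrite /= add0n | by rewrite /= gK |].
have -> : 1 + Negz k.+1 = Negz k by rewrite !NegzE; lia.
by rewrite gK.
Qed.

Lemma iterzN1 n x : iterz f g (-1 + n) x = g (iterz f g n x).
Proof. by have := iterzS (-1 + n) x; rewrite addrA subrr add0r => ->; rewrite fK. Qed.

Lemma iterzD m n x : iterz f g (m + n) x = iterz f g m (iterz f g n x).
Proof.
case: m => [k|k].
  elim: k => [|k IH]; first by rewrite add0r.
  by rewrite -addn1 PoszD addrAC addrC iterzS IH -iterzS addrC -PoszD addn1.
elim: k => [|k IH]; first by rewrite iterzN1.
have -> : Negz k.+1 + n = -1 + (Negz k + n) by rewrite !NegzE; lia.
by rewrite iterzN1 IH -iterzN1; congr iterz; rewrite !NegzE; lia.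
Qed.

Lemma iterz_inj n : injective (iterz f g n).
Proof. by move=> x y /(congr1 (iterz f g (- n))); rewrite -!iterzD addNr. Qed.

Lemma iterzM (a q : int) x :
  iterz (iterz f g a) (iterz f g (- a)) q x = iterz f g (q * a) x.
Proof.
set F := iterz f g a; set G := iterz f g (- a).
case: q => [k|k]; elim: k => [|k IH]; first by rewrite mul0r.
- rewrite -[iterz F G k.+1 x]/(F (iterz F G k x)) IH /F -iterzD.
  by congr iterz; lia.
- by rewrite /= /G NegzE; congr iterz; lia.
- rewrite -[iterz F G (Negz k.+1) x]/(G (iterz F G (Negz k) x)) IH /G -iterzD.
  by congr iterz; rewrite !NegzE; lia.
Qed.

End IterZ.

Lemma iterz_semiconj {X Y : Type} (f g : X -> X) (f' g' : Y -> Y) (phi : X -> Y) :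
  (forall x, phi (f x) = f' (phi x)) -> (forall x, phi (g x) = g' (phi x)) ->
  forall n x, phi (iterz f g n x) = iterz f' g' n (phi x).
Proof.
move=> hf hg [k|k] x /=; elim: k => [|k IH] //=.
- by rewrite hf IH.
- by rewrite hg IH.
Qed.

Lemma iterz_continuous {X : topologicalType} [f g : X -> X] :
  continuous f -> continuous g -> forall n, continuous (iterz f g n).
Proof.
move=> cf cg [k|k] /=; elim: k => [|k IH] //= x.
- exact: cvg_id.
- by apply: continuous_comp; [exact: IH | exact: cf].
- by apply: continuous_comp; [exact: IH | exact: cg].
Qed.


Lemma image_closure_sub {U V : topologicalType} [f : U -> V] (A : set U) :
  continuous f -> f @` closure A `<=` closure (f @` A).
Proof.
move=> cf _ [y clAy <-] B /cf /clAy [a [Aa Bfa]].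
by exists (f a); split => //; exists a.
Qed.

Lemma compact_nested_cluster {R : realType} {U : topologicalType} (K : set U)
    (A : R -> set U) :
  compact K -> (forall e, 0 < e -> A e `<=` K) ->
  (forall e, 0 < e -> A e !=set0) ->
  (forall e1 e2, 0 < e1 -> e1 <= e2 -> A e1 `<=` A e2) ->
  exists2 p, K p & forall e, 0 < e -> closure (A e) p.
Proof.
move=> cK AK An Amono.
pose F := filter_from [set e : R | 0 < e] A.
have FF : Filter F.
  apply: filter_from_filter; first by exists 1 => /=; exact: ltr01.
  move=> i j /= i0 j0; have m0 : 0 < Order.min i j by rewrite lt_min i0 j0.
  exists (Order.min i j) => // y Ay.
  by split; apply: (Amono _ _ m0 _ _ Ay); rewrite ge_min lexx ?orbT.
have PF : ProperFilter F by apply: filter_from_proper => i /An.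
have [p [Kp Cp]] := cK F PF (ex_intro2 _ _ 1 ltr01 (AK 1 ltr01)).
by exists p => // e e0 B nB; apply: Cp => //; exists e.
Qed.

Section PseudoMetric.
Context {R : realType} {M : pseudoMetricType R}.

Lemma hausdorff_ballP :
  hausdorff_space M <-> forall x y : M, (forall e, 0 < e -> ball x e y) -> x = y.
Proof.
split => [hM x y xy|H x y].
  by apply: close_eq => //; rewrite ball_close => e; exact: xy.
by rewrite -closeEnbhs ball_close => xy; apply: H => e e0; exact: (xy (PosNum e0)).
Qed.

Lemma closure_ballP (A : set M) p :
  closure A p <-> forall e, 0 < e -> exists a, A a /\ ball p e a.
Proof.
split => [clAp e e0|H B /nbhs_ex [e Be]]; first exact: clAp (nbhsx_ballx p _ e0).
by have [a [Aa pa]] := H e%:num (gt0 e); exists a; split => //; exact: Be.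
Qed.

Lemma ball_triangle3 [a b c d : M] [e : R] :
  ball a (e / 3) b -> ball b (e / 3) c -> ball c (e / 3) d -> ball a e d.
Proof.
move=> ab bc cd; apply: le_ball (ball_triangle (ball_triangle ab bc) cd).
by rewrite -!mulr2n; lra.
Qed.

Lemma continuous_at_ball {N : pseudoMetricType R} [f : M -> N] [x] :
  {for x, continuous f} ->
  forall e, 0 < e -> exists2 r, 0 < r & forall y, ball x r y -> ball (f x) e (f y).
Proof.
move=> cf e e0; have /nbhs_ex [r Hr] := cf _ (nbhsx_ballx (f x) _ e0).
by exists r%:num.
Qed.

Lemma subspace_continuous_ballP {N : topologicalType} (A : set M) (f : M -> N) :
  {within A, continuous f} <-> forall x, A x -> forall V, nbhs (f x) V ->
    exists2 r, 0 < r & forall y, A y -> ball x r y -> V (f y).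
Proof.
split => [/subspace_continuousP cf|cf].
  move=> x Ax V /(cf x Ax).
  by rewrite /within /= => /nbhs_ex [r Hr]; exists r%:num => // y Ay /Hr; apply.
apply/subspace_continuousP => x Ax V /(cf x Ax) [r r0 Hr]; rewrite /within /=.
by apply: filterS (nbhsx_ballx x _ r0) => y xy Ay; exact: Hr.
Qed.

Lemma hausdorff_ball_sep [x y : M] :
  hausdorff_space M -> x <> y -> exists2 r, 0 < r & ~ ball x r y.
Proof.
move=> /hausdorff_ballP hM xy; apply: contrapT => nr; apply/xy/hM => r r0.
by apply: contrapT => nb; apply: nr; exists r.
Qed.

End PseudoMetric.

Lemma cluster_ball_along {R : realType} {U : topologicalType} {M : pseudoMetricType R}
    (u : int -> U) (f g : int -> M) :
  compact [set: U] -> (forall e, 0 < e -> exists n, ball (f n) e (g n)) ->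
  exists p, forall e, 0 < e -> closure [set u n | n in [set n | ball (f n) e (g n)]] p.
Proof.
move=> cU fg; pose A e := [set u n | n in [set n | ball (f n) e (g n)]].
have [p _ clp] : exists2 p, [set: U] p & forall e, 0 < e -> closure (A e) p.
  apply: compact_nested_cluster cU _ _ _ => [//|e /fg [n fgn]|e1 e2 _ e12 _ [n fgn <-]].
  - by exists (u n), n.
  - by exists n => //; exact: le_ball fgn.
by exists p.
Qed.

Section Powd.
Context {R : realType} {X : pseudoMetricType R} {d : nat}.

Lemma powd_hausdorff : hausdorff_space X -> hausdorff_space (powd X d).
Proof.
move=> /hausdorff_ballP hX; apply/hausdorff_ballP => y z yz.
by apply/funext => i; apply: hX => e e0; exact: yz.
Qed.

Lemma powd_proj_continuous (i : 'I_d) : continuous (fun y : powd X d => y i).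
Proof.
move=> y N /nbhs_ex [e He]; apply: filterS (nbhsx_ballx y _ (gt0 e)).
by move=> z yz; apply: He; exact: yz.
Qed.

Lemma powd_continuous {U : topologicalType} (h : U -> powd X d) :
  (forall i, continuous (fun u => h u i)) -> continuous h.
Proof.
move=> ch u N /nbhs_ex [e He].
apply: (@filterS _ _ _ [set v | forall i, ball (h u i) e%:num (h v i)]).
  by move=> v Hv; apply: He; exact: Hv.
by apply: filter_forall => i; apply: (ch i); exact: nbhsx_ballx.
Qed.

Lemma powd_compact : compact [set: X] -> compact [set: powd X d].
Proof.
move=> cX.
have cP := @tychonoff _ (fun _ : 'I_d => X) (fun _ => [set: X]) (fun _ => cX).
have idc : continuous (fun y : prod_topology (fun _ : 'I_d => X) => (y : powd X d)).
  by apply: powd_continuous => i; exact: (@proj_continuous _ (fun _ : 'I_d => X) i).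
have := continuous_compact (continuous_subspaceT idc) cP.
by congr compact; apply/seteqP; split => // y _; exists y.
Qed.

End Powd.

Definition orbit2 {G Y : Type} (act : G -> Y -> Y) (y y' : Y) : set (Y * Y) :=
  [set (act g y, act g y') | g in [set: G]].

Section GdAct.
Context {R : realType} {X : pseudoMetricType R} {T Tinv : X -> X} {d : nat}.
Hypotheses (TK : cancel T Tinv) (TiK : cancel Tinv T).
Local Notation gd := (gd_act d T Tinv).

Lemma gd_actE p q (y : powd X d) (i : 'I_d) :
  gd (p, q) y i = iterz T Tinv (p + i.+1%:Z * q) (y i).
Proof.
rewrite /gd_act /= (iterz_semiconj _ _ T Tinv (fun y => y i)) //.
rewrite (iterz_semiconj _ _ (iterz T Tinv i.+1%:Z) (iterz T Tinv (- i.+1%:Z))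
  (fun y => y i)) //.
by rewrite iterzM // -iterzD // mulrC.
Qed.

Lemma gd_actD g g' y : gd g (gd g' y) = gd (g.1 + g'.1, g.2 + g'.2) y.
Proof.
case: g g' => p q [p' q']; apply/funext => i /=.
by rewrite !gd_actE -iterzD //; congr iterz; ring.
Qed.

Hypotheses (cT : continuous T) (cTi : continuous Tinv).

Lemma gd_act_continuous g : continuous (gd g).
Proof.
case: g => p q; apply: powd_continuous => i.
have -> : (fun y : powd X d => gd (p, q) y i) =
    iterz T Tinv (p + i.+1%:Z * q) \o (fun y : powd X d => y i).
  by apply/funext => y; rewrite gd_actE.
move=> y; apply: continuous_comp; first exact: powd_proj_continuous.
exact: iterz_continuous.
Qed.

Lemma Nd_gd_invariant g : gd g @` Nd d T Tinv `<=` Nd d T Tinv.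
Proof.
move=> z /(image_closure_sub _ (gd_act_continuous g)); apply: closureS.
move=> _ [_ [x [p [q ->]]] <-]; exists x, (g.1 + p), (g.2 + q).
by apply/funext => i; case: g => p' q'; rewrite gd_actE -iterzD //; congr iterz; ring.
Qed.

Lemma system_on_Nd : hausdorff_space X -> compact [set: X] ->
  system_on gd (Nd d T Tinv).
Proof.
move=> hX cX; split.
- exact: powd_hausdorff.
- exact: subclosed_compact (@closed_closure _ _) (powd_compact (d := d) cX) _.
- by move=> g; apply: continuous_subspaceT; exact: gd_act_continuous.
- exact: Nd_gd_invariant.
Qed.

Lemma orbit2_closure_trans [y y' a b] : closure (orbit2 gd y y') (a, b) ->
  closure (orbit2 gd a b) `<=` closure (orbit2 gd y y').
Proof.
move=> clab p /closure_ballP clp; apply/closure_ballP => e e0.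
have e2 : 0 < e / 2 by rewrite divr_gt0.
have [_ [[g _ <-] [pg1 pg2]]] := clp _ e2.
have [r1 r10 Hr1] := continuous_at_ball (gd_act_continuous g a) _ e2.
have [r2 r20 Hr2] := continuous_at_ball (gd_act_continuous g b) _ e2.
have r0 : 0 < Order.min r1 r2 by rewrite lt_min r10 r20.
have [_ [[g' _ <-] [ag' bg']]] := (iffLR (closure_ballP _ _)) clab _ r0.
exists (gd g (gd g' y), gd g (gd g' y')); split.
  by exists (g.1 + g'.1, g.2 + g'.2) => //; rewrite !gd_actD.
split; apply: ball_split; [exact: pg1| |exact: pg2|].
- by apply: Hr1; apply: le_ball ag'; rewrite ge_min lexx.
- by apply: Hr2; apply: le_ball bg'; rewrite ge_min lexx orbT.
Qed.

End GdAct.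

Section InducedMap.
Context {R : realType} {Y Z : pseudoMetricType R} {W : topologicalType}.
Context {A : set Y} {B : set Z}.

Lemma continuous_induced [p : Y -> Z] [h : Y -> W] [pre : Z -> Y] :
  compact A -> hausdorff_space Z ->
  {within A, continuous p} -> {within A, continuous h} ->
  (forall z, B z -> A (pre z)) -> (forall z, B z -> p (pre z) = z) ->
  (forall y, A y -> h y = h (pre (p y))) -> {within B, continuous (h \o pre)}.
Proof.
move=> cA /hausdorff_ballP hZ /subspace_continuous_ballP cp /subspace_continuous_ballP ch.
move=> preA preE hpre; apply/subspace_continuous_ballP => z Bz V nV.
apply: contrapT => nex.
pose D r := pre @` [set z' | [/\ B z', ball z r z' & ~ V (h (pre z'))]].
have DA r : 0 < r -> D r `<=` A by move=> _ _ [z' [Bz' _ _] <-]; exact: preA.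
have D0 r : 0 < r -> D r !=set0.
  move=> r0; apply: contrapT => nD; apply: nex; exists r => // z' Bz' zz'.
  by apply: contrapT => nV'; apply: nD; exists (pre z'), z'.
have Dmono r1 r2 : 0 < r1 -> r1 <= r2 -> D r1 `<=` D r2.
  move=> _ r12 _ [z' [Bz' zz' nV'] <-]; exists z' => //.
  by split => //; exact: le_ball zz'.
have [y Ay clD] := compact_nested_cluster _ _ cA DA D0 Dmono.
have pyz : p y = z.
  apply: hZ => e e0; have e2 : 0 < e / 2 by rewrite divr_gt0.
  have [r r0 Hr] := cp y Ay _ (nbhsx_ballx (p y) _ e2).
  have /closure_ballP/(_ _ r0) [_ [[z' [Bz' zz' _] <-] yz']] := clD _ e2.
  apply: (ball_split _ (ball_sym zz')); rewrite -(preE z') //.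
  exact: Hr _ (preA _ Bz') yz'.
have [r r0 Hr] : exists2 r, 0 < r & forall y', A y' -> ball y r y' -> V (h y').
  by apply: ch => //; rewrite hpre // pyz.
have /closure_ballP/(_ _ r0) [_ [[z' [Bz' _ nVz'] <-] yz']] := clD _ ltr01.
by apply: nVz'; apply: Hr yz'; exact: preA.
Qed.

End InducedMap.

Section Factors.
Context {R : realType} {G : Type} {Y Z W : pseudoMetricType R}.
Context {actY : G -> Y -> Y} {actZ : G -> Z -> Z} {actW : G -> W -> W}.
Context {A : set Y} {B : set Z} {C : set W}.

Lemma factor_distal_orbit2_diag [h : Y -> W] [y y' c] :
  closed A -> (forall g, actY g @` A `<=` A) ->
  factor_map actY A actW C h -> distal_on actW C ->
  A y -> A y' -> closure (orbit2 actY y y') (c, c) -> h y = h y'.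
Proof.
move=> clA AYinv [ch hA hact] dC Ay Ay' clc.
have Ac : A c.
  apply: clA; apply/closure_ballP => e e0.
  have [_ [[g _ <-] [yc _]]] := (iffLR (closure_ballP _ _)) clc _ e0.
  by exists (actY g y); split => //; apply: AYinv; exists y.
have hAC u : A u -> C (h u) by move=> Au; rewrite -hA; exists u.
apply: dC; [exact: hAC | exact: hAC |] => e e0.
have e2 : 0 < e / 2 by rewrite divr_gt0.
have [r r0 Hr] := (iffLR (subspace_continuous_ballP _ _)) ch c Ac _
  (nbhsx_ballx (h c) _ e2).
have [_ [[g _ <-] [cy cy']]] := (iffLR (closure_ballP _ _)) clc _ r0.
have AYg u : A u -> A (actY g u) by move=> Au; apply: AYinv; exists u.
exists g; rewrite -!hact //; apply: ball_splitr (Hr _ (AYg _ Ay) cy) _.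
exact: Hr _ (AYg _ Ay') cy'.
Qed.

Lemma factor_map_through [p : Y -> Z] [h : Y -> W] :
  compact A -> (forall g, actY g @` A `<=` A) ->
  hausdorff_space Z -> (forall z, exists y, p y = z) ->
  factor_map actY A actZ B p -> factor_map actY A actW C h ->
  (forall y y', A y -> A y' -> p y = p y' -> h y = h y') ->
  exists k, factor_map actZ B actW C k /\ forall y, A y -> h y = k (p y).
Proof.
move=> cA AYinv hZ p_onto [cp pA pact] [ch hA hact] hfib.
have pre_ex z : exists y, p y = z /\ (B z -> A y).
  have [/= Bz|nBz] := pselect (B z); last first.
    by have [y yz] := p_onto z; exists y; split => // /nBz.
  by move: Bz; rewrite -pA => -[y Ay <-]; exists y.
have [pre preP] := choice pre_ex.
have preE z : p (pre z) = z by have [] := preP z.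
have preA z : B z -> A (pre z) by have [] := preP z.
have pAB y : A y -> B (p y) by move=> Ay; rewrite -pA; exists y.
have hpre y : A y -> h y = h (pre (p y)).
  by move=> Ay; apply: hfib (preA _ (pAB _ Ay)) _ => //; rewrite preE.
exists (h \o pre); split => //; split.
- exact: continuous_induced cA hZ cp ch preA (fun z _ => preE z) hpre.
- apply/seteqP; split => [_ [z Bz <-]|w].
    by rewrite -hA; exists (pre z) => //; exact: preA.
  by rewrite -hA => -[y Ay <-]; exists (p y); [exact: pAB | rewrite /= -hpre].
- move=> g z Bz /=; have Az := preA _ Bz.
  have Agz : A (actY g (pre z)) by apply: AYinv; exists (pre z).
  by rewrite -hact // (hpre _ Agz) pact // preE.
Qed.

End Factors.

Section PowerMap.
Context {R : realType} {X Y : pseudoMetricType R} {d : nat}.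
Context {T Tinv : X -> X} {S Sinv : Y -> Y} { pi : X -> Y }.
Hypotheses (TK : cancel T Tinv) (TiK : cancel Tinv T).
Hypotheses (SK : cancel S Sinv) (SiK : cancel Sinv S).

Lemma distal_on_gd [A : set (powd Y d)] :
  distal_on (zact S Sinv) [set: Y] -> distal_on (gd_act d S Sinv) A.
Proof.
move=> dY y y' _ _ yy'; apply/funext => i; apply: dY => // e /yy' [[p q] /(_ i)].
by rewrite !gd_actE // => ?; exists (p + i.+1%:Z * q).
Qed.

Hypothesis pi_fac : factor_map (zact T Tinv) [set: X] (zact S Sinv) [set: Y] pi.

Let pi_continuous : continuous pi.
Proof. by case: pi_fac => cpi _ _; apply/continuous_subspace_setT. Qed.

Let pi_onto y : exists x, pi x = y.
Proof. by case: pi_fac => _ /seteqP[_ /(_ y I)] [x _ <-]; exists x. Qed.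

Let pi_act n x : pi (zact T Tinv n x) = zact S Sinv n (pi x).
Proof. by case: pi_fac => _ _; apply. Qed.

Lemma powmap_onto z : exists y, powmap d pi y = z.
Proof.
have /choice [y yz] : forall i, exists x, pi x = z i by move=> i; exact: pi_onto.
by exists y; apply/funext => i; exact: yz.
Qed.

Lemma powmap_gd g y :
  powmap d pi (gd_act d T Tinv g y) = gd_act d S Sinv g (powmap d pi y).
Proof. by case: g => p q; apply/funext => i; rewrite /powmap !gd_actE // pi_act. Qed.

Lemma powmap_factor_map : hausdorff_space Y -> compact [set: X] ->
  factor_map (gd_act d T Tinv) (Nd d T Tinv) (gd_act d S Sinv) (Nd d S Sinv)
    (powmap d pi).
Proof.
move=> hY cX.
have cpm : continuous (powmap d pi).
  apply: powd_continuous => i y.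
  by apply: continuous_comp; [exact: powd_proj_continuous | exact: pi_continuous].
split; last by move=> g y _; exact: powmap_gd.
  exact: continuous_subspaceT.
apply/seteqP; split.
  move=> z /(image_closure_sub _ cpm); apply: closureS => _ [_ [x [p [q ->]]] <-].
  by exists (pi x), p, q; apply/funext => i; rewrite /powmap pi_act.
have clI : closed (powmap d pi @` Nd d T Tinv).
  apply: compact_closed; first exact: powd_hausdorff.
  apply: continuous_compact (continuous_subspaceT cpm) _.
  exact: subclosed_compact (@closed_closure _ _) (powd_compact (d := d) cX) _.
move=> z clz; apply: clI; apply: closureS clz => _ [x [p [q ->]]].
have [x' <-] := pi_onto x.
exists (fun i : 'I_d => zact T Tinv (p + i.+1%:Z * q) x').
  by apply: subset_closure; exists x', p, q.
by apply/funext => i; rewrite /powmap pi_act.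
Qed.

End PowerMap.


(* [compact_second_countable] is stated for pointed spaces. *)
Definition pointed_at {R : realType} {X : pseudoMetricType R} (x0 : X) : Type := X.
HB.instance Definition _ (R : realType) (X : pseudoMetricType R) (x0 : X) :=
  PseudoMetric.copy (pointed_at x0) X.
HB.instance Definition _ (R : realType) (X : pseudoMetricType R) (x0 : X) :=
  isPointed.Build (pointed_at x0) x0.

Lemma compact_countable_basis {R : realType} (X : pseudoMetricType R) :
  compact [set: X] -> exists B : nat -> set X,
    forall x N, nbhs x N -> exists n, B n x /\ B n `<=` N.
Proof.
move=> cX; have [[x0 _]|nX] := pselect (exists x : X, True); last first.
  by exists (fun _ => set0) => x; case: nX; exists x.
have [B cB [_ Bnbhs]] := @compact_second_countable R (pointed_at x0) cX.
have [g gB] := pcard_surjP cB.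
exists g => x N /Bnbhs [U [BU Ux] UN].
by have [n _ gnU] := gB U BU; exists n; rewrite gnU.
Qed.

Definition saturated {R : realType} {X : pseudoMetricType R} (T Tinv : X -> X)
  (A : set X) := forall x y, proximal (zact T Tinv) x y -> A x -> A y.

(* X with the P-saturated open sets: the topology of X/P(X,T) pulled back to X. *)
Definition sat_topology {R : realType} {X : pseudoMetricType R} (T Tinv : X -> X)
  : Type := X.

HB.instance Definition _ (R : realType) (X : pseudoMetricType R) (T Tinv : X -> X) :=
  Choice.on (sat_topology T Tinv).

Section SatOpen.
Context {R : realType} {X : pseudoMetricType R} (T Tinv : X -> X).

Definition sat_open (A : set X) := open A /\ saturated T Tinv A.

Lemma sat_openT : sat_open setT.
Proof. by split => //; exact: openT. Qed.

Lemma sat_openI : setI_closed sat_open.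
Proof.
move=> A B [oA sA] [oB sB]; split; first exact: openI.
by move=> x y xy [Ax Bx]; split; [exact: sA Ax|exact: sB Bx].
Qed.

Lemma sat_open_bigcup (I : Type) (f : I -> set X) :
  (forall i, sat_open (f i)) -> sat_open (\bigcup_i f i).
Proof.
move=> fo; split; first by apply: bigcup_open => i _; case: (fo i).
by move=> x y xy [i _ fx]; exists i => //; case: (fo i) => _; apply; [exact: xy|].
Qed.

End SatOpen.

HB.instance Definition _ (R : realType) (X : pseudoMetricType R) (T Tinv : X -> X) :=
  isOpenTopological.Build (sat_topology T Tinv) (sat_openT T Tinv) (@sat_openI _ _ T Tinv)
    (@sat_open_bigcup _ _ T Tinv).

(* Receives X/P(X,T) through x |-> (f j (T^n x))_(j, n) for a separating family f
   of P-invariant functions; [shift_act] is the induced Z-action. *)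
Definition shift_space (R : realType) : pseudoMetricType R :=
  prod_topology (fun _ : nat * nat * int => R^o).

Definition shift_act {R : realType} (k : int) (w : shift_space R) : shift_space R :=
  fun j => w (j.1, j.2 + k).

Lemma shift_space_hausdorff {R : realType} : hausdorff_space (shift_space R).
Proof. by apply: hausdorff_product => _; exact: Rhausdorff. Qed.

Lemma shift_proj_continuous {R : realType} j : continuous (fun w : shift_space R => w j).
Proof. exact: proj_continuous. Qed.

Lemma shift_space_continuous {R : realType} {U : topologicalType} (h : U -> shift_space R) :
  (forall j, continuous (fun u => h u j)) -> continuous h.
Proof.
move=> ch u; apply/cvg_sup => j.
exact: (@continuous_comp_initial (shift_space R) U _ (fun w : shift_space R => w j) h (ch j)).
Qed.

Lemma shift_act_continuous {R : realType} k : continuous (@shift_act R k).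
Proof. by apply: shift_space_continuous => j; exact: shift_proj_continuous. Qed.

Section ClosedProximal.
Context {R : realType} {X : pseudoMetricType R} {T Tinv : X -> X}.
Hypotheses (hX : hausdorff_space X) (cX : compact [set: X]).
Hypotheses (cT : continuous T) (cTi : continuous Tinv).
Hypotheses (TK : cancel T Tinv) (TiK : cancel Tinv T).

Local Notation Tn := (zact T Tinv).
Local Notation prox := (proximal (zact T Tinv)).

Lemma proximal_refl x : prox x x.
Proof. by move=> e e0; exists 0; exact: ballxx. Qed.

Lemma proximal_sym [x y] : prox x y -> prox y x.
Proof. by move=> xy e /xy [n xyn]; exists n; exact: ball_sym. Qed.

Lemma proximal_zact m [x y] : prox x y -> prox (Tn m x) (Tn m y).
Proof. by move=> xy e /xy [n xyn]; exists (n - m); rewrite /zact -!iterzD // subrK. Qed.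

Lemma zact_sep_window [x y] N : x <> y ->
  exists2 r, 0 < r & forall n : int, (`|n| < N)%N -> ~ ball (Tn n x) r (Tn n y).
Proof.
move=> xy; elim: N => [|N [r r0 Hr]]; first by exists 1.
have sep n : exists2 s, 0 < s & ~ ball (Tn n x) s (Tn n y).
  by apply: hausdorff_ball_sep => // /(iterz_inj TK TiK).
have [s1 s10 ns1] := sep N; have [s2 s20 ns2] := sep (- N%:Z).
exists (Order.min r (Order.min s1 s2)); first by rewrite !lt_min r0 s10 s20.
move=> n nN; have [/Hr nr|[->|->]] : (`|n| < N)%N \/ n = N \/ n = - N%:Z by lia.
- by move=> nb; apply: nr; apply: le_ball nb; rewrite ge_min lexx.
- by move=> nb; apply: ns1; apply: le_ball nb; rewrite !ge_min lexx !orbT.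
- by move=> nb; apply: ns2; apply: le_ball nb; rewrite !ge_min lexx !orbT.
Qed.

(* The liminf in [proxrel] may be read as an inf: distinct points stay apart
   on every finite window of times. *)
Lemma proxrelP x y : prox x y <-> proxrel T Tinv (x, y).
Proof.
split => [xy e N e0|xy e e0]; last by have [n [_ ?]] := xy e 0%N e0; exists n.
have [<-|nxy] := pselect (x = y); first by exists N; split => //; exact: ballxx.
have [r r0 Hr] := zact_sep_window N nxy.
have m0 : 0 < Order.min e r by rewrite lt_min e0 r0.
have [n xyn] := xy _ m0.
exists n; split; last by apply: le_ball xyn; rewrite ge_min lexx.
by rewrite leqNgt; apply/negP => /Hr; apply; apply: le_ball xyn; rewrite ge_min lexx orbT.
Qed.

Lemma proximal_orbit2_closure [x y] a b :
  closure (orbit2 Tn x y) (a, b) -> prox a b -> prox x y.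
Proof.
move=> clab ab e e0; have e3 : 0 < e / 3 by rewrite divr_gt0.
have [m abm] := ab _ e3.
have [r1 r10 Hr1] := continuous_at_ball (iterz_continuous cT cTi m a) _ e3.
have [r2 r20 Hr2] := continuous_at_ball (iterz_continuous cT cTi m b) _ e3.
have /closure_ballP/(_ (Order.min r1 r2)) [|_ [[n _ <-] [an bn]]] := clab.
  by rewrite lt_min r10 r20.
exists (m + n); rewrite /zact !iterzD //.
apply: (ball_triangle3 (ball_sym (Hr1 _ _)) abm (Hr2 _ _)).
- by apply: le_ball an; rewrite ge_min lexx.
- by apply: le_ball bn; rewrite ge_min lexx orbT.
Qed.

Hypothesis Pclosed : closed (proxrel T Tinv).

Lemma proximal_closed : closed [set xy : X * X | prox xy.1 xy.2].
Proof.
suff -> : [set xy : X * X | prox xy.1 xy.2] = proxrel T Tinv by [].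
by apply/seteqP; split => -[x y] /proxrelP.
Qed.

Lemma proximal_limit a b :
  (forall r, 0 < r -> exists u v, [/\ prox u v, ball a r u & ball b r v]) -> prox a b.
Proof.
move=> near; apply: (proximal_closed (a, b)); apply/closure_ballP.
by move=> r /near [u [v [uv au bv]]]; exists (u, v).
Qed.

Lemma proximal_trans [x y z] : prox x y -> prox y z -> prox x z.
Proof.
move=> xy yz.
have cX3 : compact [set: X * X * X].
  by rewrite -!setXTT; apply: compact_setX => //; exact: compact_setX.
have [[[a a'] c] clA] := cluster_ball_along (fun n => (Tn n x, Tn n y, Tn n z))
  (fun n => Tn n x) (fun n => Tn n y) cX3 xy.
have aa' : a = a'.
  apply: (iffLR hausdorff_ballP hX) => e e0; have e3 : 0 < e / 3 by rewrite divr_gt0.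
  have /closure_ballP/(_ _ e3) [_ [[n xyn <-] [[an a'n] _]]] := clA _ e3.
  exact: ball_triangle3 an xyn (ball_sym a'n).
subst a'; have /closure_ballP near1 := clA _ ltr01.
apply: (proximal_orbit2_closure a c).
- apply/closure_ballP => r /near1 [_ [[n _ <-] [[an _] cn]]].
  by exists (Tn n x, Tn n z); split => //; exists n.
- apply: proximal_limit => r /near1 [_ [[n _ <-] [[_ an] cn]]].
  by exists (Tn n y), (Tn n z); split => //; exact: proximal_zact.
Qed.


Definition saturation (K : set X) : set X := [set y | exists2 x, K x & prox x y].

Lemma sub_saturation K : K `<=` saturation K.
Proof. by move=> x Kx; exists x => //; exact: proximal_refl. Qed.

Lemma saturated_saturation K : saturated T Tinv (saturation K).
Proof. by move=> x y xy [z Kz zx]; exists z => //; exact: proximal_trans zx xy. Qed.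

Lemma saturatedC A : saturated T Tinv A -> saturated T Tinv (~` A).
Proof. by move=> sA x y xy nAx Ay; apply/nAx/(sA _ _ _ Ay)/proximal_sym. Qed.

Lemma saturation_closed K : closed K -> closed (saturation K).
Proof.
move=> clK y /closure_ballP clKy.
pose A e := [set x | K x /\ exists y', ball y e y' /\ prox x y'].
have [x _ clA] : exists2 x, [set: X] x & forall e, 0 < e -> closure (A e) x.
  apply: compact_nested_cluster cX _ _ _ => [//|e /clKy [y' [[x Kx xy'] yy']]|].
    by exists x; split => //; exists y'.
  move=> e1 e2 _ e12 x [Kx [y' [yy' xy']]]; split => //.
  by exists y'; split => //; exact: le_ball yy'.
exists x.
  apply: clK; apply/closure_ballP => r r0.
  by have /closure_ballP/(_ _ r0) [x' [[Kx' _] xx']] := clA _ ltr01; exists x'.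
apply: proximal_limit => r r0.
have /closure_ballP/(_ _ r0) [x' [[_ [y' [yy' x'y']]] xx']] := clA _ r0.
by exists x', y'.
Qed.

Lemma sat_topology_closedP (A : set X) :
  closed (A : set (sat_topology T Tinv)) <-> closed A /\ saturated T Tinv A.
Proof.
rewrite -openC -[closed A]openC; split => [[oA /saturatedC]|[oA sA]].
  by rewrite setCK.
by split => //; exact: saturatedC.
Qed.

Lemma sat_topology_normal : normal_space (sat_topology T Tinv).
Proof.
apply/(@normal_openP R) => A B /sat_topology_closedP [clA sA].
move=> /sat_topology_closedP [clB sB] AB0.
have [U [V [oU oV AU BV UV0]]] := (@normal_openP R X).1 pseudometric_normal A B clA clB AB0.
have shrink (C O : set X) : open O -> saturated T Tinv C -> C `<=` O ->
    [/\ open (~` saturation (~` O) : set (sat_topology T Tinv)),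
        C `<=` ~` saturation (~` O) & ~` saturation (~` O) `<=` O].
  move=> oO sC CO; split.
  - split; last exact/saturatedC/saturated_saturation.
    by apply/closed_openC/saturation_closed/open_closedC.
  - by move=> c Cc [u nOu uc]; apply/nOu/CO/(sC _ _ _ Cc)/proximal_sym.
  - by move=> x nx; apply: contrapT => nOx; apply: nx; exact: sub_saturation.
have [oU' AU' U'U] := shrink A U oU sA AU.
have [oV' BV' V'V] := shrink B V oV sB BV.
exists (~` saturation (~` U)), (~` saturation (~` V)); split => //.
by rewrite -subset0 => x [/U'U Ux /V'V Vx]; rewrite -UV0.
Qed.

Lemma saturated_urysohn [A B : set X] :
  closed A -> closed B -> saturated T Tinv A -> saturated T Tinv B -> A `&` B = set0 ->
  exists f : X -> R^o, [/\ continuous f, forall x y, prox x y -> f x = f y,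
    forall x, A x -> f x = 0 & forall x, B x -> f x = 1].
Proof.
move=> clA clB sA sB AB0.
have clA' : closed (A : set (sat_topology T Tinv)) by apply/sat_topology_closedP.
have clB' : closed (B : set (sat_topology T Tinv)) by apply/sat_topology_closedP.
have /(@uniform_separatorP _ R) [f [cf _ fA fB]] :=
  normal_uniform_separator sat_topology_normal clA' clB' AB0.
have sat_nbhs x N : nbhs (f x : R^o) N ->
    exists U : set X, [/\ open U, saturated T Tinv U, U x & U `<=` f @^-1` N].
  by move=> /(cf x) [U [[oU sU] Ux UN]]; exists U.
exists f; split.
- move=> x N /sat_nbhs [U [oU _ Ux UN]].
  by apply: filterS UN _; exact: open_nbhs_nbhs.
- move=> x y xy; apply: (iffLR (@hausdorff_ballP R R^o) (@Rhausdorff R)) => e e0.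
  have [U [_ sU Ux UN]] := sat_nbhs x _ (nbhsx_ballx (f x : R^o) _ e0).
  exact: UN (sU _ _ xy Ux).
- by move=> x Ax; apply: fA; exists x.
- by move=> x Bx; apply: fB; exists x.
Qed.

Lemma proximal_separating_family : exists f : nat * nat -> X -> R^o,
  [/\ forall j, continuous (f j), forall j x y, prox x y -> f j x = f j y &
      forall a b, (forall j, f j a = f j b) -> prox a b].
Proof.
have [B Bbasis] := compact_countable_basis _ cX.
pose SB n := saturation (closure (B n)).
have clSB n : closed (SB n) by apply/saturation_closed/closed_closure.
have sep j : exists f : X -> R^o, [/\ continuous f, forall x y, prox x y -> f x = f y &
    SB j.1 `&` SB j.2 = set0 ->
    (forall x, SB j.1 x -> f x = 0) /\ (forall x, SB j.2 x -> f x = 1)].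
  have [SB0|nSB0] := pselect (SB j.1 `&` SB j.2 = set0); last first.
    by exists (fun=> 0); split => // x; apply: cvg_cst.
  have [f [cf fP f0 f1]] := saturated_urysohn (clSB _) (clSB _)
    (saturated_saturation _) (saturated_saturation _) SB0.
  by exists f.
have [f fP] := choice sep; exists f; split; [by move=> j; case: (fP j)..|].
move=> a b fab; apply: proximal_limit => r r0; have r2 : 0 < r / 2 by rewrite divr_gt0.
have [n [Bna BnS]] := Bbasis _ _ (nbhsx_ballx a _ r2).
have [m [Bmb BmS]] := Bbasis _ _ (nbhsx_ballx b _ r2).
have /set0P [z [[u clu uz] [v clv vz]]] : SB n `&` SB m != set0.
  apply/eqP => SB0; have [_ _ /(_ SB0) [f0 f1]] := fP (n, m).
  have := fab (n, m); rewrite f0 ?f1; try exact/sub_saturation/subset_closure.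
  by move/eqP; rewrite eq_sym oner_eq0.
exists u, v; split; first exact: proximal_trans uz (proximal_sym vz).
- have /closure_ballP/(_ _ r2) [w [Bnw uw]] := clu.
  exact: ball_splitl (BnS _ Bnw) uw.
- have /closure_ballP/(_ _ r2) [w [Bmw vw]] := clv.
  exact: ball_splitl (BmS _ Bmw) vw.
Qed.

Section ShiftEmbedding.
Variable f : nat * nat -> X -> R^o.
Hypotheses (cf : forall j, continuous (f j))
  (f_prox : forall j x y, prox x y -> f j x = f j y)
  (f_sep : forall a b, (forall j, f j a = f j b) -> prox a b).

Let embed (x : X) : shift_space R := fun j => f j.1 (Tn j.2 x).

Let embed_zact k x : embed (Tn k x) = shift_act k (embed x).
Proof. by apply/funext => j; rewrite /embed /shift_act /zact /= -iterzD. Qed.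

Let embed_continuous : continuous embed.
Proof.
apply: shift_space_continuous => j x.
by apply: continuous_comp; [exact: iterz_continuous | exact: cf].
Qed.

Let embed_inj_proximal a b : embed a = embed b -> prox a b.
Proof. by move=> ab; apply: f_sep => j; exact: (congr1 (fun w => w (j, 0)) ab). Qed.

Let embed_distal : distal_on shift_act (range embed).
Proof.
move=> _ _ [x _ <-] [y _ <-] xy.
suff /proximal_zact pxy : prox x y.
  by apply/funext => j; apply: f_prox; exact: pxy.
have cX2 : compact [set: X * X] by rewrite -setXTT; exact: compact_setX.
have [[a b] clA] := cluster_ball_along (fun k => (Tn k x, Tn k y))
  (fun k => shift_act k (embed x)) (fun k => shift_act k (embed y)) cX2 xy.
apply: (proximal_orbit2_closure a b).
  apply/closure_ballP => r r0; have /closure_ballP/(_ _ r0) [_ [[k _ <-] abk]] := clA _ ltr01.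
  by exists (Tn k x, Tn k y); split => //; exists k.
apply/embed_inj_proximal/(iffLR hausdorff_ballP shift_space_hausdorff) => e e0.
have e3 : 0 < e / 3 by rewrite divr_gt0.
have [r1 r10 Hr1] := continuous_at_ball (embed_continuous a) _ e3.
have [r2 r20 Hr2] := continuous_at_ball (embed_continuous b) _ e3.
have /closure_ballP/(_ (Order.min r1 r2)) [|_ [[k xyk <-] [ak bk]]] := clA _ e3.
  by rewrite lt_min r10 r20.
have exyk : ball (embed (Tn k x)) (e / 3) (embed (Tn k y)) by rewrite !embed_zact.
apply: (ball_triangle3 (Hr1 _ _) exyk (ball_sym (Hr2 _ _))).
- by apply: le_ball ak; rewrite ge_min lexx.
- by apply: le_ball bk; rewrite ge_min lexx orbT.
Qed.

Lemma separating_family_distal_factor : exists h : X -> shift_space R,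
  [/\ system_on shift_act (range h), factor_map (zact T Tinv) [set: X] shift_act (range h) h,
      distal_on shift_act (range h) & forall a b, h a = h b -> prox a b].
Proof.
exists embed; split; [split| |exact: embed_distal|exact: embed_inj_proximal].
- exact: shift_space_hausdorff.
- exact: continuous_compact (continuous_subspaceT embed_continuous) cX.
- by move=> k; apply: continuous_subspaceT; exact: shift_act_continuous.
- by move=> k _ [_ [x _ <-] <-]; exists (Tn k x) => //; rewrite embed_zact.
- by split => //; exact: continuous_subspaceT.
Qed.

End ShiftEmbedding.

Lemma proximal_of_max_distal_factor {Y : pseudoMetricType R} [S Sinv : Y -> Y]
    [pi : X -> Y] :
  max_distal_factor (zact T Tinv) [set: X] (zact S Sinv) [set: Y] pi ->
  forall x x', pi x = pi x' -> prox x x'.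
Proof.
move=> [_ _ _ univ] x x' xx'.
have [f [cf f_prox f_sep]] := proximal_separating_family.
have [h [hsys hfac hdist hsep]] := separating_family_distal_factor f cf f_prox f_sep.
have [k [_ hk]] := univ _ _ _ h hsys hfac hdist.
by apply: hsep; rewrite !hk // xx'.
Qed.

Context {d : nat}.
Local Notation gd := (gd_act d T Tinv).

Lemma gd_act_n0 n (y : powd X d) i : gd (n, 0) y i = Tn n (y i).
Proof. by rewrite gd_actE // mulr0 addr0. Qed.

Lemma orbit2_closure_step [k] [y y' : powd X d] : (k < d)%N ->
  (forall i, prox (y i) (y' i)) -> (forall i : 'I_d, (k < i)%N -> y i = y' i) ->
  exists a b, [/\ closure (orbit2 gd y y') (a, b), forall i, prox (a i) (b i)
    & forall i : 'I_d, (k <= i)%N -> a i = b i].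
Proof.
move=> kd yP yE; pose i0 := Ordinal kd.
have cY2 : compact [set: powd X d * powd X d].
  by rewrite -setXTT; apply: compact_setX; exact: powd_compact.
have [[a b] clA] := cluster_ball_along (fun n => (gd (n, 0) y, gd (n, 0) y'))
  (fun n => Tn n (y i0)) (fun n => Tn n (y' i0)) cY2 (yP i0).
have /closure_ballP near1 := clA _ ltr01.
exists a, b; split.
- apply/closure_ballP => r /near1 [_ [[n _ <-] abn]].
  by exists (gd (n, 0) y, gd (n, 0) y'); split => //; exists (n, 0).
- move=> i; apply: proximal_limit => r /near1 [_ [[n _ <-] [an bn]]].
  exists (gd (n, 0) y i), (gd (n, 0) y' i); split; [|exact: an i|exact: bn i].
  by rewrite !gd_act_n0; exact: proximal_zact.
- move=> i ki; apply: (iffLR hausdorff_ballP hX) => e e0.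
  have e3 : 0 < e / 3 by rewrite divr_gt0.
  have /closure_ballP/(_ _ e3) [_ [[n yn <-] [an bn]]] := clA _ e3.
  apply: (ball_triangle3 (an i) _ (ball_sym (bn i))); rewrite /= !gd_act_n0.
  have [/yE ->|ik] := ltnP k i; first exact: ballxx.
  by have -> : i = i0 by apply: val_inj => /=; apply/eqP; rewrite eqn_leq ik ki.
Qed.

Lemma orbit2_closure_diag [y y' : powd X d] :
  (forall i, prox (y i) (y' i)) -> exists c, closure (orbit2 gd y y') (c, c).
Proof.
suff diag k : forall z z' : powd X d, (forall i, prox (z i) (z' i)) ->
    (forall i : 'I_d, (k <= i)%N -> z i = z' i) -> exists c, closure (orbit2 gd z z') (c, c).
  by move=> yP; apply: (diag d) => // i; rewrite leqNgt ltn_ord.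
elim: k => [|k IH] z z' zP zE.
  have -> : z' = z by apply/funext => i; rewrite zE.
  by exists z; apply: subset_closure; exists (0, 0).
have [kd|dk] := ltnP k d; last by apply: IH => // i ki; apply: zE; have := ltn_ord i; lia.
have [a [b [clab abP abE]]] := orbit2_closure_step kd zP zE.
have [c clc] := IH a b abP abE.
by exists c; exact: (orbit2_closure_trans TK TiK cT cTi clab _ clc).
Qed.

End ClosedProximal.

Theorem theorem4p2 (R : realType) (X Xdis : pseudoMetricType R)
  (T Tinv : X -> X) (S Sinv : Xdis -> Xdis) (pi : X -> Xdis) (d : nat) :
  (* (X,T) is a topological dynamical system: compact metric, T homeomorphism *)
  hausdorff_space X -> compact [set: X] ->
  continuous T -> continuous Tinv -> cancel T Tinv -> cancel Tinv T ->
  (* S is the induced homeomorphism on X_dis *)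
  continuous S -> continuous Sinv -> cancel S Sinv -> cancel Sinv S ->
  (* minimal, with closed proximal relation *)
  minimal_sys T ->
  closed (@proxrel R X T Tinv) ->
  (* pi : (X,T) -> (X_dis,S) is the maximal distal factor *)
  max_distal_factor (zact T Tinv) [set: X] (zact S Sinv) [set: Xdis] pi ->
  (* conclusion *)
  max_distal_factor (gd_act d T Tinv) (Nd d T Tinv)
                    (gd_act d S Sinv) (Nd d S Sinv) (powmap d pi).
Proof.
move=> hX cX cT cTi TK TiK cS cSi SK SiK _ Pclosed hmax.
have [[hXd cXd _ _] pi_fac dXd _] := hmax.
have pd_fac := powmap_factor_map (d := d) TK TiK SK SiK pi_fac hXd cX.
have [_ cNd _ Nd_inv] := system_on_Nd (d := d) TK TiK cT cTi hX cX.
split; [exact: system_on_Nd SK SiK cS cSi hXd cXd | exact: pd_fac |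
  exact: (distal_on_gd (A := Nd d S Sinv) SK SiK dXd) |].
move=> W actW C h _ h_fac h_dist.
apply: (factor_map_through cNd Nd_inv (powd_hausdorff hXd) (powmap_onto pi_fac)
  pd_fac h_fac) => y y' Ny Ny' yy'.
have yP i : proximal (zact T Tinv) (y i) (y' i).
  apply: (proximal_of_max_distal_factor hX cX cT cTi TK TiK Pclosed hmax).
  by move/(congr1 (fun z => z i)): yy'.
have [c clc] := orbit2_closure_diag hX cX cT cTi TK TiK Pclosed yP.
exact: factor_distal_orbit2_diag (@closed_closure _ _) Nd_inv h_fac h_dist Ny Ny' clc.
Qed.
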